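(* Let $\Phi \in \mathbb{R}^{m\times n}$ have unit $\ell_2$-norm columns $\phi_1,\dots,\phi_n$, let $X \in \mathbb{R}^{n\times K}$ with support $S=\mathrm{supp}(X)$, let $\overline{S}=[n]\setminus S$, assume $\Phi_S$ has full column rank, let $E\in\mathbb{R}^{m\times K}$ be arbitrary and $Y=\Phi X + E$. Let $q_1,\dots,q_K\ge 0$, $Q=\mathrm{diag}(q_1,\dots,q_K)$. Run SOMP-NS on $Y$, $\Phi$ with weights $q_k$, and let $t<|S|$ be such that all atoms selected before iteration $t$ belong to $S$, i.e. $S_t\subseteq S$. Let $P^{(t)}=\Phi_{S_t}\Phi_{S_t}^{+}$ (with $P^{(0)}=0$), $Z^{(t)}=(I-P^{(t)})\Phi X$ and $E^{(t)}=(I-P^{(t)})E$. If $$\left(1-\|\Phi_S^{+}\Phi_{\overline{S}}\|_{1}\right)\|\Phi_S^{\mathrm{T}} Z^{(t)} Q\|_{\infty} > 2\,\|\Phi^{\mathrm{T}} E^{(t)} Q\|_{\infty},$$ then the atom $j_t$ selected at iteration $t$ belongs to $S$ (regardless of tie-breaking).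
   Context: For $S\subseteq[n]$, $\Phi_S$ is the submatrix of columns indexed by $S$; $A^+$ is the Moore–Penrose pseudoinverse; $\|A\|_\infty=\max_i\sum_j|A_{i,j}|$ and $\|A\|_1=\max_j\sum_i|A_{i,j}|$. $\mathrm{supp}(X)$ is the set of row indices $i$ with $X_{i,k}\ne0$ for some $k$. Algorithm SOMP-NS, on input $Y\in\mathbb{R}^{m\times K}$, $\Phi$, weights $q_k\ge0$: set $S_0=\emptyset$, $R^{(0)}=Y$; at iteration $t=0,1,\dots$: choose $j_t\in\arg\max_{j\in[n]}\sum_{k=1}^K q_k|\langle r^{(t)}_k,\phi_j\rangle|$ where $r^{(t)}_k$ is the $k$-th column of $R^{(t)}$; set $S_{t+1}=S_t\cup\{j_t\}$ and $R^{(t+1)}=(I-\Phi_{S_{t+1}}\Phi_{S_{t+1}}^+)Y$. *)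

From HB Require Import structures.
From Stdlib Require Import ClassicalEpsilon.
From mathcomp Require Import all_boot all_order all_algebra.
From mathcomp Require Import reals.
Set Implicit Arguments. Unset Strict Implicit. Unset Printing Implicit Defensive.
Import Order.TTheory GRing.Theory Num.Theory.
Local Open Scope ring_scope.

Section Defs.
Variable R : realType.

Definition colS m n (Phi : 'M[R]_(m, n)) (S : {set 'I_n}) : 'M[R]_(m, #|S|) :=
  \matrix_(i < m, j < #|S|) Phi i (@enum_val _ (mem S) j).

Definition penrose m n (A : 'M[R]_(m, n)) (B : 'M[R]_(n, m)) : Prop :=
  [/\ A *m B *m A = A, B *m A *m B = B,
      (A *m B)^T = A *m B & (B *m A)^T = B *m A].

Definition pinv m n (A : 'M[R]_(m, n)) : 'M[R]_(n, m) :=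
  epsilon (inhabits 0) (fun B => penrose A B).

Definition normInf m n (A : 'M[R]_(m, n)) : R :=
  \big[Num.max/0]_(i < m) \sum_(j < n) `|A i j|.
Definition norm1 m n (A : 'M[R]_(m, n)) : R :=
  \big[Num.max/0]_(j < n) \sum_(i < m) `|A i j|.

Definition supp n K (X : 'M[R]_(n, K)) : {set 'I_n} :=
  [set i | [exists k, X i k != 0]].

Definition projS m n (Phi : 'M[R]_(m, n)) (S : {set 'I_n}) : 'M[R]_m :=
  colS Phi S *m pinv (colS Phi S).

Definition selected n (js : nat -> 'I_n) (t : nat) : {set 'I_n} :=
  [set js (nat_of_ord s) | s : 'I_t].

Definition residual m n K (Phi : 'M[R]_(m, n)) (Y : 'M[R]_(m, K))
  (js : nat -> 'I_n) (t : nat) : 'M[R]_(m, K) :=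
  (1%:M - projS Phi (selected js t)) *m Y.

Definition somp_score m n K (Phi : 'M[R]_(m, n)) (q : 'I_K -> R)
  (Res : 'M[R]_(m, K)) (j : 'I_n) : R :=
  \sum_(k < K) q k * `|(Phi^T *m Res) j k|.

(* js is a valid execution of SOMP-NS (any tie-breaking) for iterations 0..T *)
Definition somp_ns_run m n K (Phi : 'M[R]_(m, n)) (Y : 'M[R]_(m, K))
  (q : 'I_K -> R) (js : nat -> 'I_n) (T : nat) : Prop :=
  forall t, (t <= T)%N -> forall j : 'I_n,
    somp_score Phi q (residual Phi Y js t) j <=
    somp_score Phi q (residual Phi Y js t) (js t).

End Defs.

From HB Require Import structures.
From Stdlib Require Import ClassicalEpsilon.
From mathcomp Require Import all_boot all_order all_algebra.
From mathcomp Require Import reals lra.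
Import Order.TTheory GRing.Theory Num.Theory.
Set Implicit Arguments.
Unset Strict Implicit.
Unset Printing Implicit Defensive.
Local Open Scope ring_scope.

(* While only atoms of S have been selected, Z^(t) still lies in the column
   space of Phi_S, so Z^(t) = (Phi_S^+)^T Phi_S^T Z^(t).  Hence for j outside S
   the weighted correlation of phi_j with Z^(t) is at most
   ||Phi_S^+ Phi_Sbar||_1 ||Phi_S^T Z^(t) Q||_oo, whereas the best atom of S
   reaches ||Phi_S^T Z^(t) Q||_oo.  The noise E^(t) perturbs every score by at
   most ||Phi^T E^(t) Q||_oo, so under the hypothesis an atom outside S can
   never attain the maximal score. *)

Section PseudoInverse.
Variable R : realType.

Lemma rowmx_mul_tr_eq0 m (w : 'rV[R]_m) : w *m w^T = 0 -> w = 0.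
Proof.
move=> /matrixP /(_ 0 0); rewrite !mxE => wwT0.
apply/rowP => k; rewrite mxE.
have sq_ge0 i : predT i -> 0 <= w 0 i * w^T i 0 by rewrite mxE -expr2 sqr_ge0.
have /eqP := @psumr_eq0P R _ predT _ sq_ge0 wwT0 k isT.
by rewrite mxE -expr2 sqrf_eq0 => /eqP.
Qed.

Lemma gram_unitmx m s (A : 'M[R]_(m, s)) : \rank A = s -> A^T *m A \in unitmx.
Proof.
move=> rkA; rewrite -row_free_unit -kermx_eq0; apply/eqP/row_matrixP => i.
rewrite row0; set v := row i _.
have vAA : v *m (A^T *m A) = 0 by apply/sub_kermxP; exact: row_sub.
have vAT : v *m A^T = 0.
  apply: rowmx_mul_tr_eq0.
  by rewrite trmx_mul trmxK mulmxA -(mulmxA v) vAA mul0mx.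
apply/eqP; rewrite -(mulmx_free_eq0 _ (B := A^T)) ?vAT //.
by rewrite /row_free mxrank_tr rkA.
Qed.

Lemma penrose_pinv m s (A : 'M[R]_(m, s)) : \rank A = s -> penrose A (pinv A).
Proof.
move=> rkA; apply: epsilon_spec.
have Gu := gram_unitmx rkA.
have GT : (A^T *m A)^T = A^T *m A by rewrite trmx_mul trmxK.
exists (invmx (A^T *m A) *m A^T); split.
- by rewrite -!mulmxA mulVmx // mulmx1.
- by rewrite -(mulmxA (invmx _)) mulVmx // mul1mx.
- by rewrite !trmx_mul trmxK trmx_inv GT mulmxA.
- by rewrite -mulmxA mulVmx // trmx1.
Qed.

Lemma penrose_range_trmx m s p (A : 'M[R]_(m, s)) (B : 'M[R]_(s, m))
    (W : 'M[R]_(s, p)) :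
  penrose A B -> A *m W = B^T *m (A^T *m (A *m W)).
Proof.
case=> ABA _ ABT _.
by rewrite mulmxA -trmx_mul ABT mulmxA ABA.
Qed.

End PseudoInverse.

Section ColumnSelection.
Variables (R : realType) (m n : nat) (Phi : 'M[R]_(m, n)).

Lemma colS_mulmx_supported p (S : {set 'I_n}) (M : 'M[R]_(n, p)) :
  (forall j k, j \notin S -> M j k = 0) ->
  Phi *m M = colS Phi S *m \matrix_(l, k) M (enum_val l) k.
Proof.
move=> M0; apply/matrixP => i k; rewrite !mxE.
rewrite (bigID (mem S)) /= [X in _ + X]big1 ?addr0; last first.
  by move=> j /M0 ->; rewrite mulr0.
by rewrite big_enum_val; apply: eq_bigr => l _; rewrite !mxE.
Qed.

Lemma colS_subset (T S : {set 'I_n}) :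
  T \subset S -> exists C : 'M[R]_(#|S|, #|T|), colS Phi T = colS Phi S *m C.
Proof.
move=> TS; pose D : 'M[R]_(n, #|T|) := \matrix_(j, l) (j == enum_val l)%:R.
have -> : colS Phi T = Phi *m D.
  apply/matrixP => i l; rewrite !mxE (bigD1 (enum_val l)) //= big1.
    by rewrite mxE eqxx mulr1 addr0.
  by move=> j /negbTE jl; rewrite mxE jl mulr0.
eexists; apply: colS_mulmx_supported => j l jS; rewrite mxE.
by case: eqP => // jl; case/negP: jS; rewrite jl (subsetP TS) ?enum_valP.
Qed.

Lemma projS_compl_colS_range p (T S : {set 'I_n}) (W : 'M[R]_(#|S|, p)) :
  T \subset S -> exists W' : 'M[R]_(#|S|, p),
    (1%:M - projS Phi T) *m (colS Phi S *m W) = colS Phi S *m W'.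
Proof.
move=> /colS_subset [C TC].
exists (W - C *m (pinv (colS Phi T) *m (colS Phi S *m W))).
by rewrite mulmxBl mul1mx mulmxBr /projS !mulmxA TC.
Qed.

Lemma colS_trmx_mulE p (S : {set 'I_n}) (M : 'M[R]_(m, p)) l k :
  ((colS Phi S)^T *m M) l k = (Phi^T *m M) (enum_val l) k.
Proof. by rewrite !mxE; apply: eq_bigr => i _; rewrite !mxE. Qed.

Lemma mulmx_colSE p (S : {set 'I_n}) (M : 'M[R]_(p, m)) i l :
  (M *m colS Phi S) i l = (M *m Phi) i (enum_val l).
Proof. by rewrite !mxE; apply: eq_bigr => k _; rewrite !mxE. Qed.

End ColumnSelection.

Lemma normInf_ge0 (R : realType) p r (M : 'M[R]_(p, r)) : 0 <= normInf M.
Proof.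
apply: (big_ind (fun x => 0 <= x)) => // [x y x0 _|i _].
  by rewrite le_max x0.
by rewrite sumr_ge0.
Qed.

Lemma col_sum_le_norm1 (R : realType) p r (M : 'M[R]_(p, r)) j :
  \sum_i `|M i j| <= norm1 M.
Proof. exact: (le_bigmax _ (fun j => \sum_i `|M i j|) j). Qed.

Section WeightedRowNorm.
Variables (R : realType) (K : nat) (q : 'I_K -> R).
Hypothesis q_ge0 : forall k, 0 <= q k.

Definition wrow p (M : 'M[R]_(p, K)) i := \sum_k q k * `|M i k|.

Local Notation Q := (diag_mx (\row_k q k)).

Lemma normInf_diag_row p (M : 'M[R]_(p, K)) i :
  \sum_k `|(M *m Q) i k| = wrow M i.
Proof.
apply: eq_bigr => k _.
by rewrite mul_mx_diag !mxE normrM (ger0_norm (q_ge0 k)) mulrC.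
Qed.

Lemma wrow_le_normInf p (M : 'M[R]_(p, K)) i : wrow M i <= normInf (M *m Q).
Proof.
rewrite -normInf_diag_row.
exact: (le_bigmax _ (fun i => \sum_k `|(M *m Q) i k|) i).
Qed.

Lemma normInf_le p (M : 'M[R]_(p, K)) c :
  0 <= c -> (forall i, wrow M i <= c) -> normInf (M *m Q) <= c.
Proof.
by move=> c0 Mc; apply: bigmax_le => // i _; rewrite normInf_diag_row.
Qed.

Lemma wrow_ge0 p (M : 'M[R]_(p, K)) i : 0 <= wrow M i.
Proof. by apply: sumr_ge0 => k _; rewrite mulr_ge0. Qed.

Lemma wrowD_le p (M N : 'M[R]_(p, K)) i : wrow (M + N) i <= wrow M i + wrow N i.
Proof.
rewrite /wrow -big_split; apply: ler_sum => k _ /=.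
by rewrite -mulrDr ler_wpM2l // mxE ler_normD.
Qed.

Lemma wrow_le_addr p (M N : 'M[R]_(p, K)) i :
  wrow M i <= wrow (M + N) i + wrow N i.
Proof.
rewrite /wrow -big_split; apply: ler_sum => k _ /=.
rewrite -mulrDr ler_wpM2l // mxE.
by have := ler_normD (M i k + N i k) (- N i k); rewrite addrK normrN.
Qed.

Lemma wrow_trmx_mul_le s r (C : 'M[R]_(s, r)) (G : 'M[R]_(s, K)) j :
  wrow (C^T *m G) j <= (\sum_l `|C l j|) * normInf (G *m Q).
Proof.
apply: (@le_trans _ _ (\sum_l `|C l j| * wrow G l)); last first.
  by rewrite mulr_suml ler_sum // => l _; rewrite ler_wpM2l ?wrow_le_normInf.
rewrite /wrow.
rewrite (eq_bigr (fun l => \sum_k q k * (`|C l j| * `|G l k|))); last first.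
  by move=> l _; rewrite mulr_sumr; apply: eq_bigr => k _; rewrite mulrCA.
rewrite exchange_big /=; apply: ler_sum => k _.
rewrite -mulr_sumr ler_wpM2l // mxE (le_trans (ler_norm_sum _ _ _)) //.
by apply: ler_sum => l _; rewrite mxE normrM.
Qed.

End WeightedRowNorm.

Section ScoreBounds.
Variables (R : realType) (m n K : nat) (Phi : 'M[R]_(m, n)) (S : {set 'I_n}).
Variable q : 'I_K -> R.
Hypothesis q_ge0 : forall k, 0 <= q k.

Local Notation Q := (diag_mx (\row_k q k)).

Lemma normInf_colS_trmx_le (M : 'M[R]_(m, K)) c : 0 <= c ->
    (forall j, j \in S -> wrow q (Phi^T *m M) j <= c) ->
  normInf ((colS Phi S)^T *m M *m Q) <= c.
Proof.
move=> c0 Mc; apply: normInf_le => // l.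
have -> : wrow q ((colS Phi S)^T *m M) l = wrow q (Phi^T *m M) (enum_val l).
  by apply: eq_bigr => k _; rewrite colS_trmx_mulE.
exact/Mc/enum_valP.
Qed.

Lemma wrow_pinv_compl_le s (B : 'M[R]_(s, m)) (G : 'M[R]_(s, K)) j :
    j \notin S ->
  wrow q ((B *m Phi)^T *m G) j
    <= norm1 (B *m colS Phi (~: S)) * normInf (G *m Q).
Proof.
move=> jS; have jSc : j \in ~: S by rewrite inE.
rewrite (le_trans (wrow_trmx_mul_le q_ge0 _ _ _)) // ler_wpM2r ?normInf_ge0 //.
rewrite (le_trans _ (col_sum_le_norm1 _ (enum_rank_in jSc j))) //.
rewrite [X in _ <= X](eq_bigr (fun l => `|(B *m Phi) l j|)) // => l _.
by rewrite mulmx_colSE enum_rankK_in.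
Qed.

End ScoreBounds.

Theorem theorem2 (R : realType) (m n K : nat) (Phi : 'M[R]_(m, n))
  (X : 'M[R]_(n, K)) (E : 'M[R]_(m, K)) (q : 'I_K -> R)
  (js : nat -> 'I_n) (t : nat) :
  (forall j : 'I_n, \sum_(i < m) Phi i j ^+ 2 = 1) ->
  \rank (colS Phi (supp X)) = #|supp X| ->
  (forall k, 0 <= q k) ->
  somp_ns_run Phi (Phi *m X + E) q js t ->
  (t < #|supp X|)%N ->
  selected js t \subset supp X ->
  let S := supp X in
  let Q := diag_mx (\row_k q k) in
  let P := projS Phi (selected js t) in
  let Z := (1%:M - P) *m (Phi *m X) in
  let Et := (1%:M - P) *m E in
  (1 - norm1 (pinv (colS Phi S) *m colS Phi (~: S)))
      * normInf ((colS Phi S)^T *m Z *m Q)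
    > 2 * normInf (Phi^T *m Et *m Q) ->
  js t \in S.
Proof.
move=> _ rkA q_ge0 run _ TS S Q P Z Et hyp; apply/negPn/negP => jS.
set A := colS Phi S in rkA hyp; set G := A^T *m Z in hyp.
set a := norm1 _ in hyp; set N := normInf (G *m Q) in hyp.
set e := normInf _ in hyp.
set score := somp_score Phi q (residual Phi (Phi *m X + E) js t).
have scoreE c : score c = wrow q (Phi^T *m Z + Phi^T *m Et) c.
  by rewrite /score /somp_score /residual !mulmxDr.
have [W ZW] : exists W, Z = A *m W.
  have X0 j k : j \notin S -> X j k = 0.
    by rewrite inE => /existsPn /(_ k) /negPn /eqP.
  by rewrite /Z (colS_mulmx_supported Phi X0); apply: projS_compl_colS_range.
have ZG : Z = (pinv A)^T *m G.
  by rewrite /G ZW; apply/penrose_range_trmx/penrose_pinv.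
have lower : N <= score (js t) + e.
  apply: normInf_colS_trmx_le => // [|j _].
    by rewrite addr_ge0 ?normInf_ge0 ?wrow_ge0.
  rewrite (le_trans (wrow_le_addr _ _ (Phi^T *m Et) _)) //.
  rewrite lerD ?wrow_le_normInf //.
  by rewrite -scoreE run.
have upper : score (js t) <= a * N + e.
  rewrite scoreE (le_trans (wrowD_le _ _ _ _)) // lerD ?wrow_le_normInf //.
  by rewrite ZG mulmxA -trmx_mul wrow_pinv_compl_le.
move: hyp; rewrite mulrBl mul1r; lra.
Qed.
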